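(* Let $P,Q$ be probability mass functions supported on $\{1,\dots,n\}$ (all masses positive) with $P\prec Q$. Let $f:(0,\infty)\to\mathbb R$ be convex and twice differentiable with $f(1)=0$, and let $q_{\max},q_{\min}$ be the maximal and minimal masses of $Q$. Then: (a) $$n\,e_f(nq_{\min},nq_{\max})(\|Q\|_2^2-\|P\|_2^2)\ge D_f(Q\|U_n)-D_f(P\|U_n)\ge n\,c_f(nq_{\min},nq_{\max})(\|Q\|_2^2-\|P\|_2^2)\ge0,$$ with equalities in the first two inequalities if $D_f=\chi^2$. (b) If moreover $q_{\max}/q_{\min}\le\rho$ for some $\rho\ge1$, then $0\le\|Q\|_2^2-\|P\|_2^2\le\frac{(\rho-1)^2}{4\rho n}$.
   Context: $U_n$ is the uniform distribution on $\{1,\dots,n\}$; $\|\cdot\|_2$ is the Euclidean norm of the probability vector. $P\prec Q$ ($P$ is majorized by $Q$) means that for each $k$, the sum of the $k$ largest masses of $P$ is at most that of $Q$. $D_f(P\|Q)=\sum_xQ(x)f(P(x)/Q(x))$; $\chi^2$ corresponds to $f(t)=(t-1)^2$. With $\mathcal I(\xi_1,\xi_2)=[\xi_1,\xi_2]\cap(0,\infty)$: $c_f(\xi_1,\xi_2)=\tfrac12\inf_{t\in\mathcal I}f''(t)$, $e_f(\xi_1,\xi_2)=\tfrac12\sup_{t\in\mathcal I}f''(t)$. *)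

From Stdlib Require Import Reals Lra List Permutation Sorted.
Import ListNotations.
Open Scope R_scope.

Definition lsum (l : list R) : R := fold_right Rplus 0 l.

Definition pos_pmf (n : nat) (P : list R) : Prop :=
  length P = n /\ Forall (fun x => 0 < x) P /\ lsum P = 1.

Definition unif (n : nat) : list R := repeat (1 / INR n) n.

Definition sqnorm2 (P : list R) : R := lsum (map (fun x => x * x) P).

Definition Df (f : R -> R) (P Q : list R) : R :=
  lsum (map (fun pq => snd pq * f (fst pq / snd pq)) (combine P Q)).

Definition decr_rearr (l s : list R) : Prop :=
  Permutation l s /\ Sorted (fun a b => b <= a) s.

Definition majorized (P Q : list R) : Prop :=
  forall sP sQ, decr_rearr P sP -> decr_rearr Q sQ ->
  forall k : nat, lsum (firstn k sP) <= lsum (firstn k sQ).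

Definition lmax (l : list R) : R := fold_right Rmax (hd 0 l) l.
Definition lmin (l : list R) : R := fold_right Rmin (hd 0 l) l.

Definition Iset (xi1 xi2 : R) (t : R) : Prop := xi1 <= t <= xi2 /\ 0 < t.

Definition is_glb (E : R -> Prop) (m : R) : Prop :=
  (forall x, E x -> m <= x) /\ (forall b, (forall x, E x -> b <= x) -> b <= m).

(* c_f = 1/2 inf_{t in I} f''(t);  e_f = 1/2 sup_{t in I} f''(t).
   Stated as relations: c is c_f / e is e_f (sup possibly infinite: then no e). *)
Definition is_cf (f2 : R -> R) (xi1 xi2 c : R) : Prop :=
  is_glb (fun y => exists t, Iset xi1 xi2 t /\ y = f2 t) (2 * c).
Definition is_ef (f2 : R -> R) (xi1 xi2 e : R) : Prop :=
  is_lub (fun y => exists t, Iset xi1 xi2 t /\ y = f2 t) (2 * e).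

Definition convex_pos (f : R -> R) : Prop :=
  forall x y t, 0 < x -> 0 < y -> 0 <= t <= 1 ->
    f (t * x + (1 - t) * y) <= t * f x + (1 - t) * f y.

From Stdlib Require Import Reals Lra Lia List Permutation Sorted Orders.
From Stdlib Require Mergesort.
Import ListNotations.
Open Scope R_scope.

(** Against the uniform distribution,
    [D_f(Q||U_n) - D_f(P||U_n) = (1/n) (sum_q f (n q) - sum_p f (n p))].
    Majorization keeps every mass of [P] inside [[q_min, q_max]], and Karamata's
    inequality gives [sum_p phi (n p) <= sum_q phi (n q)] for every [phi] convex on
    [[n q_min, n q_max]]. Applied to [f t - c t^2] and [e t^2 - f t], convex since
    [c <= f''/2 <= e] there, this yields (a); for chi^2, [f'' = 2] makes both sides
    equal. Karamata itself follows by Abel summation of the tangent-line bounds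
    [phi q - phi p >= phi' p (q - p)] along decreasing rearrangements, whose partial
    sums compare by majorization. For (b), [||P||^2 >= 1/n] while
    [sum_q (q_max - q)(q - q_min) >= 0] bounds [||Q||^2], and the ratio condition
    turns the product [(n q_max - 1)(1 - n q_min)] into [(rho - 1)^2 / (4 rho)]. *)

Local Notation decreasing := (Sorted (fun a b : R => b <= a)).

Lemma lsum_cons (x : R) (l : list R) : lsum (x :: l) = x + lsum l.
Proof. reflexivity. Qed.

Lemma lsum_app (l1 l2 : list R) : lsum (l1 ++ l2) = lsum l1 + lsum l2.
Proof. induction l1 as [|x l1 IH]; simpl; [ring | rewrite IH; ring]. Qed.

Lemma lsum_perm (l l' : list R) : Permutation l l' -> lsum l = lsum l'.
Proof. induction 1; simpl; lra. Qed.

Lemma lsum_map_perm (h : R -> R) (l l' : list R) :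
  Permutation l l' -> lsum (map h l) = lsum (map h l').
Proof. intro Hperm; apply lsum_perm, Permutation_map, Hperm. Qed.

Lemma lsum_map_nonneg (h : R -> R) (l : list R) :
  (forall x, In x l -> 0 <= h x) -> 0 <= lsum (map h l).
Proof.
  induction l as [|x l IH]; intro Hh; simpl; [lra|].
  pose proof (Hh x (or_introl eq_refl)).
  pose proof (IH (fun y Hy => Hh y (or_intror Hy))); lra.
Qed.

Lemma lsum_map_quadratic (h k : R -> R) (al be ga de : R) (l : list R) :
  (forall x, In x l -> k x = al * h x + be * (x * x) + ga * x + de) ->
  lsum (map k l) =
  al * lsum (map h l) + be * sqnorm2 l + ga * lsum l + de * INR (length l).
Proof.
  unfold sqnorm2; induction l as [|x l IH]; intro Hk; [simpl; ring|].
  change (length (x :: l)) with (S (length l)); rewrite S_INR.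
  cbn [map]; rewrite !lsum_cons, Hk by (simpl; auto).
  rewrite IH by (intros; apply Hk; simpl; auto); ring.
Qed.

Lemma combine_repeat {A B : Type} (u : B) (l : list A) :
  combine l (repeat u (length l)) = map (fun p => (p, u)) l.
Proof. induction l as [|x l IH]; simpl; [reflexivity | rewrite IH; reflexivity]. Qed.

Lemma Df_unif (f : R -> R) (n : nat) (l : list R) :
  length l = n -> (0 < n)%nat ->
  Df f l (unif n) = / INR n * lsum (map (fun p => f (INR n * p)) l).
Proof.
  intros <- Hn; apply lt_0_INR in Hn; unfold Df, unif.
  rewrite combine_repeat, map_map; cbn [fst snd].
  rewrite (lsum_map_quadratic (fun p => f (INR (length l) * p)) _ (/ INR (length l)) 0 0 0);
    [ring |].
  intros x _; replace (x / (1 / INR (length l))) with (INR (length l) * x) by (field; lra).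
  field; lra.
Qed.

Lemma lmin_le_lmax (l : list R) (x : R) : In x l -> lmin l <= x <= lmax l.
Proof.
  unfold lmin, lmax; generalize (hd 0 l); intro d.
  induction l as [|y l IH]; simpl; [tauto|]; intros [<- | Hx].
  - split; [apply Rmin_l | apply Rmax_l].
  - destruct (IH Hx); split.
    + eapply Rle_trans; [apply Rmin_r | assumption].
    + eapply Rle_trans; [eassumption | apply Rmax_r].
Qed.

Lemma lmin_pos (l : list R) : l <> [] -> Forall (fun x => 0 < x) l -> 0 < lmin l.
Proof.
  intros Hl Hpos; unfold lmin.
  assert (Hd : 0 < hd 0 l) by (destruct l; [congruence | inversion Hpos; assumption]).
  revert Hd; generalize (hd 0 l); intros d Hd; clear Hl.
  induction Hpos; simpl; [assumption | apply Rmin_glb_lt; auto].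
Qed.

Lemma Sorted_impl {A : Type} (R1 R2 : A -> A -> Prop) (l : list A) :
  (forall x y, R1 x y -> R2 x y) -> Sorted R1 l -> Sorted R2 l.
Proof.
  intros H12; induction 1 as [|x l _ IH Hhd]; constructor; [exact IH|].
  destruct Hhd; constructor; auto.
Qed.

Module RGeBool <: TotalLeBool'.
  Definition t := R.
  Definition leb (x y : R) : bool := if Rle_dec y x then true else false.
  Infix "<=?" := leb (at level 70, no associativity).
  Lemma leb_total (x y : R) : leb x y = true \/ leb y x = true.
  Proof. unfold leb; destruct (Rle_dec y x), (Rle_dec x y); auto; lra. Qed.
End RGeBool.

Module RSortDecr := Mergesort.Sort RGeBool.

Lemma decr_rearr_exists (l : list R) : exists s, decr_rearr l s.
Proof.
  exists (RSortDecr.sort l); split; [apply RSortDecr.Permuted_sort|].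
  apply (Sorted_impl (fun x y => is_true (RGeBool.leb x y))); [| apply RSortDecr.Sorted_sort].
  intros x y; unfold RGeBool.leb, is_true; destruct (Rle_dec y x); [auto | discriminate].
Qed.

Lemma decreasing_strongly (l : list R) :
  decreasing l -> StronglySorted (fun a b : R => b <= a) l.
Proof. apply Sorted_StronglySorted; intros a b c; lra. Qed.

Lemma decreasing_le_head (h u : R) (l : list R) :
  decreasing (h :: l) -> In u (h :: l) -> u <= h.
Proof.
  intros Hs [<- | Hu]; [lra|].
  apply decreasing_strongly, StronglySorted_inv in Hs.
  exact (proj1 (Forall_forall _ _) (proj2 Hs) u Hu).
Qed.

Lemma decreasing_ge_last (z u : R) (l : list R) :
  decreasing (l ++ [z]) -> In u (l ++ [z]) -> z <= u.
Proof.
  intro Hs; apply decreasing_strongly in Hs.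
  induction l as [|h l IH]; simpl in *; intros [<- | Hu]; try lra; try tauto.
  - apply StronglySorted_inv in Hs.
    apply (proj1 (Forall_forall _ _) (proj2 Hs)), in_or_app; simpl; auto.
  - apply IH; [exact (proj1 (StronglySorted_inv Hs)) | exact Hu].
Qed.

Lemma decr_majorized_range (x y : list R) (m M : R) :
  length x = length y -> decreasing x -> decreasing y ->
  (forall k, lsum (firstn k y) <= lsum (firstn k x)) -> lsum y = lsum x ->
  (forall u, In u x -> m <= u <= M) -> forall u, In u y -> m <= u <= M.
Proof.
  intros Hlen Hx Hy Hpre Hsum Hrange u Hu.
  destruct y as [|h y']; [destruct Hu|].
  destruct x as [|h' x']; [discriminate|].
  split.
  - destruct (exists_last (l := h :: y') ltac:(discriminate)) as [y0 [z Ey]].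
    destruct (exists_last (l := h' :: x') ltac:(discriminate)) as [x0 [w Ex]].
    rewrite Ey in Hy, Hu, Hpre, Hsum, Hlen; rewrite Ex in Hrange, Hpre, Hsum, Hlen.
    rewrite !length_app in Hlen; simpl in Hlen.
    pose proof (Hpre (length y0 + 0)%nat) as Hpre0.
    rewrite firstn_app_2 in Hpre0.
    replace (length y0) with (length x0) in Hpre0 by lia.
    rewrite firstn_app_2, !app_nil_r in Hpre0.
    rewrite !lsum_app in Hsum; cbn in Hsum.
    pose proof (Hrange w ltac:(apply in_or_app; simpl; auto)).
    pose proof (decreasing_ge_last z u y0 Hy Hu); lra.
  - pose proof (Hpre 1%nat) as Hpre1; simpl in Hpre1.
    pose proof (Hrange h' ltac:(simpl; auto)).
    pose proof (decreasing_le_head h u y' Hy Hu); lra.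
Qed.

Fixpoint tangent_gap (W : R -> R) (x y : list R) : R :=
  match x, y with
  | a :: x', b :: y' => W b * (a - b) + tangent_gap W x' y'
  | _, _ => 0
  end.

(* Abel summation with an initial credit [s] on the partial sums of [x]. *)
Lemma tangent_gap_ge (W : R -> R) (x y : list R) (s : R) :
  length x = length y -> decreasing (map W y) -> 0 <= s ->
  (forall k, lsum (firstn k y) <= s + lsum (firstn k x)) -> lsum y = s + lsum x ->
  - hd 0 (map W y) * s <= tangent_gap W x y.
Proof.
  revert y s; induction x as [|a x IH]; intros [|b y] s Hlen Hdec Hs Hpre Hsum;
    try discriminate; cbn [map hd tangent_gap] in *.
  - lra.
  - rewrite !lsum_cons in Hsum.
    pose proof (Hpre 1%nat) as Hpre1; cbn in Hpre1.
    assert (IHy : - hd 0 (map W y) * (s + a - b) <= tangent_gap W x y).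
    { apply IH; [injection Hlen; auto | inversion Hdec; assumption | lra | | lra].
      intro k; pose proof (Hpre (S k)) as Hk; cbn [firstn] in Hk.
      rewrite !lsum_cons in Hk; lra. }
    destruct y as [|b' y]; cbn [map hd] in *.
    + destruct x; [| discriminate]; cbn in Hsum |- *; nra.
    + inversion Hdec as [|? ? _ Hhd]; inversion Hhd as [|? ? Hb]; subst.
      assert (0 <= (W b - W b') * (s + a - b)) by (apply Rmult_le_pos; lra); nra.
Qed.

Lemma tangent_gap_le (W G : R -> R) (x y : list R) :
  length x = length y ->
  (forall a b, In a x -> In b y -> W b * (a - b) <= G a - G b) ->
  tangent_gap W x y <= lsum (map G x) - lsum (map G y).
Proof.
  revert y; induction x as [|a x IH]; intros [|b y] Hlen Htan;
    try discriminate; cbn [map tangent_gap]; [cbn; lra|].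
  rewrite !lsum_cons.
  pose proof (Htan a b (or_introl eq_refl) (or_introl eq_refl)).
  pose proof (IH y ltac:(injection Hlen; auto)
                (fun a b Ha Hb => Htan a b (or_intror Ha) (or_intror Hb))); lra.
Qed.

Lemma nondecreasing_of_derive_nonneg (h h' : R -> R) (a b : R) :
  (forall t, a <= t <= b -> derivable_pt_lim h t (h' t) /\ 0 <= h' t) ->
  forall u v, a <= u -> u <= v -> v <= b -> h u <= h v.
Proof.
  intros Hh u v Hau Huv Hvb.
  destruct (Req_dec u v) as [<- | Hne]; [lra|].
  destruct (MVT_cor2 h h' u v ltac:(lra) (fun c Hc => proj1 (Hh c ltac:(lra))))
    as [c [Hmvt Hc]].
  pose proof (proj2 (Hh c ltac:(lra))); nra.
Qed.

Lemma decreasing_map (h : R -> R) (a b : R) (l : list R) :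
  (forall u v, a <= u -> u <= v -> v <= b -> h u <= h v) ->
  (forall u, In u l -> a <= u <= b) -> decreasing l -> decreasing (map h l).
Proof.
  intros Hmono Hrange Hdec; induction Hdec as [|x l Hdec IH Hhd]; constructor.
  - apply IH; intros u Hu; apply Hrange; simpl; auto.
  - destruct Hhd as [|y l Hyx]; constructor.
    apply Hmono; try lra; [apply Hrange | apply Hrange]; simpl; auto.
Qed.

Section Karamata.

Variables (a b : R) (g g' : R -> R).
Hypothesis g_deriv : forall t, a <= t <= b -> derivable_pt_lim g t (g' t).
Hypothesis g'_mono : forall u v, a <= u -> u <= v -> v <= b -> g' u <= g' v.

Lemma tangent_line_le (u v : R) :
  a <= u <= b -> a <= v <= b -> g' v * (u - v) <= g u - g v.
Proof.
  intros Hu Hv; destruct (Rtotal_order u v) as [Huv | [<- | Hvu]]; [| lra |].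
  - destruct (MVT_cor2 g g' u v Huv (fun c Hc => g_deriv c ltac:(lra))) as [c [Hmvt Hc]].
    pose proof (g'_mono c v ltac:(lra) ltac:(lra) ltac:(lra)); nra.
  - destruct (MVT_cor2 g g' v u Hvu (fun c Hc => g_deriv c ltac:(lra))) as [c [Hmvt Hc]].
    pose proof (g'_mono v c ltac:(lra) ltac:(lra) ltac:(lra)); nra.
Qed.

Lemma karamata_decreasing (x y : list R) :
  length x = length y -> decreasing y ->
  (forall u, In u x -> a <= u <= b) -> (forall u, In u y -> a <= u <= b) ->
  (forall k, lsum (firstn k y) <= lsum (firstn k x)) -> lsum y = lsum x ->
  lsum (map g y) <= lsum (map g x).
Proof.
  intros Hlen Hdec Hx Hy Hpre Hsum.
  pose proof (tangent_gap_ge g' x y 0 Hlen (decreasing_map g' a b y g'_mono Hy Hdec)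
                (Rle_refl 0) ltac:(intro k; rewrite Rplus_0_l; apply Hpre)
                ltac:(rewrite Rplus_0_l; exact Hsum)).
  pose proof (tangent_gap_le g' g x y Hlen
                (fun u v Hu Hv => tangent_line_le u v (Hx u Hu) (Hy v Hv))); lra.
Qed.

Theorem karamata (P Q : list R) :
  length P = length Q -> lsum P = lsum Q -> majorized P Q ->
  (forall u, In u Q -> a <= u <= b) -> lsum (map g P) <= lsum (map g Q).
Proof.
  intros Hlen Hsum HPQ HQ.
  destruct (decr_rearr_exists P) as [sP [HpermP HdecP]].
  destruct (decr_rearr_exists Q) as [sQ [HpermQ HdecQ]].
  pose proof (HPQ sP sQ (conj HpermP HdecP) (conj HpermQ HdecQ)) as Hpre.
  rewrite (lsum_map_perm g _ _ HpermP), (lsum_map_perm g _ _ HpermQ).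
  rewrite (lsum_perm _ _ HpermP), (lsum_perm _ _ HpermQ) in Hsum.
  rewrite (Permutation_length HpermP), (Permutation_length HpermQ) in Hlen.
  assert (HsQ : forall u, In u sQ -> a <= u <= b)
    by (intros u Hu; apply HQ, (Permutation_in _ (Permutation_sym HpermQ) Hu)).
  apply karamata_decreasing; auto.
  apply (decr_majorized_range sQ sP); auto.
Qed.

End Karamata.

Lemma derive_neg_locally_decreasing (h : R -> R) (x l : R) :
  derivable_pt_lim h x l -> l < 0 ->
  exists del, 0 < del /\
    (forall t, x < t < x + del -> h t < h x) /\ (forall t, x - del < t < x -> h x < h t).
Proof.
  intros Hh Hl; destruct (Hh (- l / 2) ltac:(lra)) as [del Hdel].
  assert (Hquot : forall t, t <> x -> Rabs (t - x) < del -> (h t - h x) / (t - x) < 0).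
  { intros t Htx Ht; specialize (Hdel (t - x) ltac:(lra) Ht).
    replace (x + (t - x)) with t in Hdel by ring.
    apply Rabs_def2 in Hdel; lra. }
  exists del; split; [apply cond_pos | split]; intros t Ht.
  - assert (Hq := Hquot t ltac:(lra) ltac:(rewrite Rabs_pos_eq; lra)).
    assert (h t - h x = (h t - h x) / (t - x) * (t - x)) by (field; lra); nra.
  - assert (Hq := Hquot t ltac:(lra) ltac:(rewrite Rabs_left; lra)).
    assert (h t - h x = (h t - h x) / (t - x) * (t - x)) by (field; lra); nra.
Qed.

(* If [f2 x < 0] then [f1] decreases across [x], so by the mean value theorem
   [f (x + h) + f (x - h) < 2 f x] for small [h], against midpoint convexity. *)
Lemma convex_second_derivative_nonneg (f f1 f2 : R -> R) :
  convex_pos f ->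
  (forall x, 0 < x -> derivable_pt_lim f x (f1 x) /\ derivable_pt_lim f1 x (f2 x)) ->
  forall x, 0 < x -> 0 <= f2 x.
Proof.
  intros Hconv Hd x Hx; destruct (Rle_lt_dec 0 (f2 x)) as [| Hneg]; [assumption | exfalso].
  destruct (derive_neg_locally_decreasing f1 x (f2 x) (proj2 (Hd x Hx)) Hneg)
    as [del [Hdel [Hright Hleft]]].
  set (h := Rmin del x / 2).
  assert (Hh : 0 < h /\ h < del /\ h < x)
    by (pose proof (Rmin_l del x); pose proof (Rmin_r del x);
        pose proof (Rmin_glb_lt del x 0 Hdel Hx); unfold h; lra).
  destruct (MVT_cor2 f f1 x (x + h) ltac:(lra) (fun c Hc => proj1 (Hd c ltac:(lra))))
    as [c1 [E1 Hc1]].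
  destruct (MVT_cor2 f f1 (x - h) x ltac:(lra) (fun c Hc => proj1 (Hd c ltac:(lra))))
    as [c2 [E2 Hc2]].
  pose proof (Hright c1 ltac:(lra)); pose proof (Hleft c2 ltac:(lra)).
  pose proof (Hconv (x + h) (x - h) (1 / 2) ltac:(lra) ltac:(lra) ltac:(lra)) as Hmid.
  replace (1 / 2 * (x + h) + (1 - 1 / 2) * (x - h)) with x in Hmid by field.
  nra.
Qed.

Lemma derivable_pt_lim_scal_sqr (k x : R) :
  derivable_pt_lim (fun t => k * (t * t)) x (k * (2 * x)).
Proof. exact (derivable_pt_lim_scal Rsqr k x _ (derivable_pt_lim_Rsqr x)). Qed.

Lemma derivable_pt_lim_scal_double (k x : R) :
  derivable_pt_lim (fun t => k * (2 * t)) x (k * 2).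
Proof.
  pose proof (derivable_pt_lim_scal _ k x _
                (derivable_pt_lim_scal id 2 x _ (derivable_pt_lim_id x))) as H.
  rewrite Rmult_1_r in H; exact H.
Qed.

Lemma chi2_second_derivative (f f1 f2 : R -> R) :
  (forall t, 0 < t -> f t = (t - 1) ^ 2) ->
  (forall x, 0 < x -> derivable_pt_lim f x (f1 x) /\ derivable_pt_lim f1 x (f2 x)) ->
  forall x, 0 < x -> f2 x = 2.
Proof.
  intros Hf Hd.
  assert (Hf1 : forall x, 0 < x -> f1 x = 2 * (x - 1)).
  { intros x Hx; apply (uniqueness_limite f x); [apply Hd, Hx|].
    apply (derivable_pt_lim_locally_ext (fun t => (t - 1) ^ 2) f x 0 (x + 1));
      [lra | intros t Ht; symmetry; apply Hf; lra |].
    replace (2 * (x - 1)) with (INR 2 * (x - 1) ^ Nat.pred 2 * (1 - 0)) by (simpl; ring).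
    apply (derivable_pt_lim_comp (fun t => t - 1) (fun t => t ^ 2)).
    - apply derivable_pt_lim_minus; [apply derivable_pt_lim_id | apply derivable_pt_lim_const].
    - apply derivable_pt_lim_pow. }
  intros x Hx; apply (uniqueness_limite f1 x); [apply Hd, Hx|].
  apply (derivable_pt_lim_locally_ext (fun t => 2 * (t - 1)) f1 x 0 (x + 1));
    [lra | intros t Ht; symmetry; apply Hf1; lra |].
  pose proof (derivable_pt_lim_scal (fun t => t - 1) 2 x _
    (derivable_pt_lim_minus _ _ x _ _ (derivable_pt_lim_id x) (derivable_pt_lim_const 1 x))) as H.
  replace (2 * (1 - 0)) with 2 in H by ring; exact H.
Qed.

Lemma is_glb_exists (E : R -> Prop) :
  (exists x, E x) -> (exists m, forall x, E x -> m <= x) -> exists m, is_glb E m.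
Proof.
  intros [x Ex] [m Hm].
  destruct (completeness (fun y => E (- y))) as [M [HMub HMlub]].
  - exists (- m); intros y Ey; pose proof (Hm _ Ey); lra.
  - exists (- x); rewrite Ropp_involutive; exact Ex.
  - exists (- M); split.
    + intros y Ey; assert (HEy : E (- - y)) by (rewrite Ropp_involutive; exact Ey).
      pose proof (HMub _ HEy); lra.
    + intros c Hc; enough (M <= - c) by lra.
      apply HMlub; intros y Ey; pose proof (Hc _ Ey); lra.
Qed.

Lemma is_lub_const (E : R -> Prop) (v u : R) :
  E v -> (forall y, E y -> y = v) -> is_lub E u -> u = v.
Proof.
  intros Ev Hconst [Hub Hlub].
  pose proof (Hub v Ev); enough (u <= v) by lra.
  apply Hlub; intros y Ey; rewrite (Hconst y Ey); lra.
Qed.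

Lemma is_glb_const (E : R -> Prop) (v m : R) :
  E v -> (forall y, E y -> y = v) -> is_glb E m -> m = v.
Proof.
  intros Ev Hconst [Hlb Hglb].
  pose proof (Hlb v Ev); enough (v <= m) by lra.
  apply Hglb; intros y Ey; rewrite (Hconst y Ey); lra.
Qed.

Lemma is_cf_exists (f2 : R -> R) (a b : R) :
  0 < a <= b -> (forall t, a <= t <= b -> 0 <= f2 t) -> exists c, is_cf f2 a b c.
Proof.
  intros Hab Hf2.
  destruct (is_glb_exists (fun y => exists t, Iset a b t /\ y = f2 t)) as [m Hm].
  - exists (f2 a), a; split; [unfold Iset; lra | reflexivity].
  - exists 0; intros y [t [[Ht _] ->]]; apply Hf2, Ht.
  - exists (m / 2); unfold is_cf; replace (2 * (m / 2)) with m by field; exact Hm.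
Qed.

Lemma chi2_cf_ef (f2 : R -> R) (a b : R) :
  0 < a <= b -> (forall t, 0 < t -> f2 t = 2) ->
  (forall e, is_ef f2 a b e -> e = 1) /\ (forall c, is_cf f2 a b c -> c = 1).
Proof.
  intros Hab Hf2.
  assert (Ha2 : exists t, Iset a b t /\ 2 = f2 t)
    by (exists a; split; [unfold Iset; lra | symmetry; apply Hf2; lra]).
  assert (Hconst : forall y, (exists t, Iset a b t /\ y = f2 t) -> y = 2)
    by (intros y [t [[_ Ht] ->]]; apply Hf2, Ht).
  split; [intros e He; pose proof (is_lub_const _ _ _ Ha2 Hconst He)
         | intros c Hc; pose proof (is_glb_const _ _ _ Ha2 Hconst Hc)]; lra.
Qed.

Lemma pos_pmf_nonempty (n : nat) (P : list R) : pos_pmf n P -> P <> [] /\ (0 < n)%nat.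
Proof.
  intros [Hlen [_ Hsum]]; destruct P as [|p P]; [cbn in Hsum; lra|].
  split; [discriminate | rewrite <- Hlen; simpl; lia].
Qed.

Lemma pos_pmf_scaled_range (n : nat) (Q : list R) :
  pos_pmf n Q -> 0 < INR n * lmin Q <= INR n * lmax Q.
Proof.
  intro HQ; destruct (pos_pmf_nonempty n Q HQ) as [HQne Hn]; apply lt_0_INR in Hn.
  pose proof (lmin_pos Q HQne (proj1 (proj2 HQ))).
  destruct Q as [|q Q']; [congruence|].
  pose proof (lmin_le_lmax (q :: Q') q (or_introl eq_refl)).
  split; [apply Rmult_lt_0_compat | apply Rmult_le_compat_l]; lra.
Qed.

Lemma lsum_sqr_le_sqnorm2 (l : list R) : lsum l * lsum l <= INR (length l) * sqnorm2 l.
Proof.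
  destruct l as [|x l']; [cbn; lra|]; set (l := x :: l').
  assert (HN : 0 < INR (length l)) by (apply lt_0_INR; simpl; lia).
  set (u := lsum l / INR (length l)).
  assert (Hvar : 0 <= lsum (map (fun x => (x - u) * (x - u)) l))
    by (apply lsum_map_nonneg; intros; apply Rle_0_sqr).
  rewrite (lsum_map_quadratic (fun _ => 0) _ 0 1 (- 2 * u) (u * u)) in Hvar
    by (intros; ring).
  assert (Hexp : INR (length l) * sqnorm2 l - lsum l * lsum l =
    INR (length l) * (0 * lsum (map (fun _ => 0) l) + 1 * sqnorm2 l + - 2 * u * lsum l
                      + u * u * INR (length l)))
    by (unfold u; field; lra).
  pose proof (Rmult_le_pos _ _ (Rlt_le _ _ HN) Hvar); lra.
Qed.

Lemma sqnorm2_le_range (l : list R) (m M : R) :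
  (forall x, In x l -> m <= x <= M) ->
  sqnorm2 l <= (M + m) * lsum l - M * m * INR (length l).
Proof.
  intro Hrange.
  assert (H : 0 <= lsum (map (fun x => (M - x) * (x - m)) l))
    by (apply lsum_map_nonneg; intros x Hx; pose proof (Hrange x Hx); nra).
  rewrite (lsum_map_quadratic (fun _ => 0) _ 0 (- 1) (M + m) (- (M * m))) in H
    by (intros; ring).
  lra.
Qed.

Lemma lsum_ge_min (l : list R) (m : R) :
  (forall x, In x l -> m <= x) -> m * INR (length l) <= lsum l.
Proof.
  intro Hmin.
  assert (H : 0 <= lsum (map (fun x => x - m) l))
    by (apply lsum_map_nonneg; intros x Hx; pose proof (Hmin x Hx); lra).
  rewrite (lsum_map_quadratic (fun _ => 0) _ 0 0 1 (- m)) in H by (intros; ring).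
  lra.
Qed.

(* [(rho - 1)^2 - 4 rho (rho y - 1)(1 - y) = (2 rho y - rho - 1)^2]. *)
Lemma ratio_bound (rho x y : R) :
  1 <= rho -> x <= rho * y -> y <= 1 -> 4 * rho * ((x - 1) * (1 - y)) <= (rho - 1) ^ 2.
Proof.
  intros Hrho Hxy Hy.
  assert (0 <= (rho * y - x) * (1 - y)) by (apply Rmult_le_pos; lra).
  assert (0 <= (2 * rho * y - rho - 1) ^ 2) by apply pow2_ge_0.
  nra.
Qed.

Lemma sqnorm2_gap_le (n : nat) (P Q : list R) (rho : R) :
  pos_pmf n P -> pos_pmf n Q -> 1 <= rho -> lmax Q / lmin Q <= rho ->
  sqnorm2 Q - sqnorm2 P <= (rho - 1) ^ 2 / (4 * rho * INR n).
Proof.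
  intros HP HQ Hrho Hratio.
  destruct (pos_pmf_nonempty n Q HQ) as [HQne Hn]; apply lt_0_INR in Hn.
  destruct HP as [HPlen [_ HPsum]]; destruct HQ as [HQlen [HQpos HQsum]].
  pose proof (lmin_pos Q HQne HQpos) as Hm.
  set (m := lmin Q) in *; set (M := lmax Q) in *.
  assert (HMm : M <= rho * m)
    by (replace M with (M / m * m) by (field; lra); apply Rmult_le_compat_r; lra).
  pose proof (lsum_sqr_le_sqnorm2 P) as HPnorm.
  pose proof (sqnorm2_le_range Q m M (lmin_le_lmax Q)) as HQnorm.
  pose proof (lsum_ge_min Q m (fun x Hx => proj1 (lmin_le_lmax Q x Hx))) as HQmin.
  rewrite HPlen, HPsum in HPnorm; rewrite HQlen, HQsum in HQnorm, HQmin.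
  pose proof (ratio_bound rho (INR n * M) (INR n * m) Hrho ltac:(nra) ltac:(lra)) as Hbound.
  apply (Rmult_le_reg_r (4 * rho * INR n)); [nra|].
  replace ((rho - 1) ^ 2 / (4 * rho * INR n) * (4 * rho * INR n)) with ((rho - 1) ^ 2)
    by (field; lra).
  assert (4 * rho * INR n * sqnorm2 Q <= 4 * rho * INR n * ((M + m) * 1 - M * m * INR n))
    by (apply Rmult_le_compat_l; nra).
  assert (4 * rho * (1 * 1) <= 4 * rho * (INR n * sqnorm2 P))
    by (apply Rmult_le_compat_l; lra).
  nra.
Qed.

Section MajorizedPmf.

Variables (n : nat) (P Q : list R).
Hypotheses (HP : pos_pmf n P) (HQ : pos_pmf n Q) (HPQ : majorized P Q).

Lemma sqnorm2_majorized_le : sqnorm2 P <= sqnorm2 Q.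
Proof.
  destruct HP as [HPlen [_ HPsum]]; destruct HQ as [HQlen [_ HQsum]].
  apply (karamata (lmin Q) (lmax Q) (fun x => x * x) (fun x => 2 * x));
    [intros; apply derivable_pt_lim_Rsqr | intros; lra | congruence | congruence
    | exact HPQ | exact (lmin_le_lmax Q)].
Qed.

Lemma karamata_pmf_scaled (phi phi1 phi2 : R -> R) :
  (forall t, INR n * lmin Q <= t <= INR n * lmax Q ->
     derivable_pt_lim phi t (phi1 t) /\ derivable_pt_lim phi1 t (phi2 t) /\ 0 <= phi2 t) ->
  lsum (map (fun p => phi (INR n * p)) P) <= lsum (map (fun q => phi (INR n * q)) Q).
Proof.
  intro Hphi.
  pose proof (proj2 (pos_pmf_nonempty n Q HQ)) as Hn; apply lt_0_INR in Hn.
  destruct HP as [HPlen [_ HPsum]]; destruct HQ as [HQlen [_ HQsum]].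
  assert (Hphi1 : forall u v, INR n * lmin Q <= u -> u <= v -> v <= INR n * lmax Q ->
                    phi1 u <= phi1 v)
    by (apply (nondecreasing_of_derive_nonneg phi1 phi2); intros t Ht; split; apply Hphi, Ht).
  apply (karamata (lmin Q) (lmax Q) _ (fun u => phi1 (INR n * u) * INR n));
    [| | congruence | congruence | exact HPQ | exact (lmin_le_lmax Q)].
  - intros t Ht.
    pose proof (derivable_pt_lim_comp (fun u => INR n * u) phi t _ _
      (derivable_pt_lim_scal id (INR n) t 1 (derivable_pt_lim_id t))
      (proj1 (Hphi (INR n * t) ltac:(split; apply Rmult_le_compat_l; lra)))) as H.
    rewrite Rmult_1_r in H; exact H.
  - intros u v Hu Huv Hv; apply Rmult_le_compat_r; [lra|].
    apply Hphi1; apply Rmult_le_compat_l; lra.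
Qed.

Lemma Df_unif_gap (f : R -> R) :
  Df f Q (unif n) - Df f P (unif n) =
  / INR n * (lsum (map (fun q => f (INR n * q)) Q) - lsum (map (fun p => f (INR n * p)) P)).
Proof.
  pose proof (proj2 (pos_pmf_nonempty n Q HQ)) as Hn.
  rewrite !Df_unif by (apply HP || apply HQ || exact Hn); ring.
Qed.

(* Karamata applied to [t |-> al f t - k t^2], convex where [2 k <= al f''];
   [al = 1] gives the lower bound by [c_f], [al = -1] the upper bound by [e_f]. *)
Lemma Df_gap_ge_quadratic (f f1 f2 : R -> R) (al k : R) :
  (forall t, INR n * lmin Q <= t <= INR n * lmax Q ->
     derivable_pt_lim f t (f1 t) /\ derivable_pt_lim f1 t (f2 t) /\ 2 * k <= al * f2 t) ->
  INR n * k * (sqnorm2 Q - sqnorm2 P) <= al * (Df f Q (unif n) - Df f P (unif n)).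
Proof.
  intro Hf.
  pose proof (proj2 (pos_pmf_nonempty n Q HQ)) as Hn; apply lt_0_INR in Hn.
  pose proof (karamata_pmf_scaled (fun t => al * f t - k * (t * t))
    (fun t => al * f1 t - k * (2 * t)) (fun t => al * f2 t - k * 2)) as Hk.
  assert (Hk' := Hk ltac:(intros t Ht; destruct (Hf t Ht) as [Hd1 [Hd2 Hf2]]; split; [| split];
    [ apply derivable_pt_lim_minus; [apply derivable_pt_lim_scal, Hd1 | apply derivable_pt_lim_scal_sqr]
    | apply derivable_pt_lim_minus; [apply derivable_pt_lim_scal, Hd2 | apply derivable_pt_lim_scal_double]
    | lra ])); clear Hk.
  rewrite (lsum_map_quadratic (fun p => f (INR n * p)) _ al (- k * INR n * INR n) 0 0 P),
    (lsum_map_quadratic (fun p => f (INR n * p)) _ al (- k * INR n * INR n) 0 0 Q)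
    in Hk' by (intros; ring).
  rewrite Df_unif_gap.
  set (FP := lsum (map (fun p => f (INR n * p)) P)) in *.
  set (FQ := lsum (map (fun q => f (INR n * q)) Q)) in *.
  replace (INR n * k * (sqnorm2 Q - sqnorm2 P))
    with (/ INR n * (INR n * INR n * k * (sqnorm2 Q - sqnorm2 P))) by (field; lra).
  replace (al * (/ INR n * (FQ - FP))) with (/ INR n * (al * (FQ - FP))) by ring.
  apply Rmult_le_compat_l; [left; apply Rinv_0_lt_compat, Hn | lra].
Qed.

Lemma Df_gap_chi2 (f : R -> R) :
  (forall t, 0 < t -> f t = (t - 1) ^ 2) ->
  Df f Q (unif n) - Df f P (unif n) = INR n * (sqnorm2 Q - sqnorm2 P).
Proof.
  intro Hf.
  pose proof (proj2 (pos_pmf_nonempty n Q HQ)) as Hn; apply lt_0_INR in Hn.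
  assert (Hsum : forall l, pos_pmf n l -> lsum (map (fun p => f (INR n * p)) l) =
                              INR n * INR n * sqnorm2 l - INR n).
  { intros l [Hlen [Hpos Hsum]].
    rewrite (lsum_map_quadratic (fun _ => 0) _ 0 (INR n * INR n) (- 2 * INR n) 1),
      Hlen, Hsum; [ring|].
    intros x Hx; rewrite Hf; [ring|].
    apply Rmult_lt_0_compat; [exact Hn | exact (proj1 (Forall_forall _ _) Hpos x Hx)]. }
  rewrite Df_unif_gap, !Hsum by assumption; field; lra.
Qed.

Section SecondDerivative.

Variables (f f1 f2 : R -> R).
Hypothesis Hd :
  forall x, 0 < x -> derivable_pt_lim f x (f1 x) /\ derivable_pt_lim f1 x (f2 x).

Lemma Df_gap_le_ef (e : R) :
  is_ef f2 (INR n * lmin Q) (INR n * lmax Q) e ->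
  Df f Q (unif n) - Df f P (unif n) <= INR n * e * (sqnorm2 Q - sqnorm2 P).
Proof.
  intros [He _]; pose proof (pos_pmf_scaled_range n Q HQ).
  enough (INR n * - e * (sqnorm2 Q - sqnorm2 P) <=
            -1 * (Df f Q (unif n) - Df f P (unif n))) by lra.
  apply (Df_gap_ge_quadratic f f1 f2); intros t Ht.
  destruct (Hd t ltac:(lra)) as [Hd1 Hd2]; split; [exact Hd1 | split; [exact Hd2 |]].
  enough (f2 t <= 2 * e) by lra.
  apply He; exists t; split; [unfold Iset; lra | reflexivity].
Qed.

Lemma Df_gap_ge_cf (c : R) :
  is_cf f2 (INR n * lmin Q) (INR n * lmax Q) c ->
  INR n * c * (sqnorm2 Q - sqnorm2 P) <= Df f Q (unif n) - Df f P (unif n).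
Proof.
  intros [Hc _]; pose proof (pos_pmf_scaled_range n Q HQ).
  enough (INR n * c * (sqnorm2 Q - sqnorm2 P) <=
            1 * (Df f Q (unif n) - Df f P (unif n))) by lra.
  apply (Df_gap_ge_quadratic f f1 f2); intros t Ht.
  destruct (Hd t ltac:(lra)) as [Hd1 Hd2]; split; [exact Hd1 | split; [exact Hd2 |]].
  enough (2 * c <= f2 t) by lra.
  apply Hc; exists t; split; [unfold Iset; lra | reflexivity].
Qed.

End SecondDerivative.

End MajorizedPmf.
Theorem theorem6 (n : nat) (P Q : list R) (f f1 f2 : R -> R) :
  pos_pmf n P -> pos_pmf n Q -> majorized P Q ->
  convex_pos f ->
  (forall x, 0 < x -> derivable_pt_lim f x (f1 x) /\ derivable_pt_lim f1 x (f2 x)) ->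
  f 1 = 0 ->
  let qmax := lmax Q in
  let qmin := lmin Q in
  let d := sqnorm2 Q - sqnorm2 P in
  let D := Df f Q (unif n) - Df f P (unif n) in
  (* (a) *)
  ((exists c, is_cf f2 (INR n * qmin) (INR n * qmax) c) /\
   (forall e, is_ef f2 (INR n * qmin) (INR n * qmax) e -> INR n * e * d >= D) /\
   (forall c, is_cf f2 (INR n * qmin) (INR n * qmax) c -> D >= INR n * c * d) /\
   0 <= d /\
   ((forall t, 0 < t -> f t = (t - 1) ^ 2) ->
      (forall e, is_ef f2 (INR n * qmin) (INR n * qmax) e -> INR n * e * d = D) /\
      (forall c, is_cf f2 (INR n * qmin) (INR n * qmax) c -> D = INR n * c * d))) /\
  (* (b) *)
  (forall rho, 1 <= rho -> qmax / qmin <= rho ->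
     0 <= d /\ d <= (rho - 1) ^ 2 / (4 * rho * INR n)).
Proof.
  intros HP HQ HPQ Hconv Hd _; cbv zeta.
  pose proof (pos_pmf_scaled_range n Q HQ) as Hrange.
  pose proof (sqnorm2_majorized_le n P Q HP HQ HPQ) as Hnorm.
  split; [split; [| split; [| split; [| split]]] |].
  - apply is_cf_exists; [exact Hrange |].
    intros t Ht; apply (convex_second_derivative_nonneg f f1 f2 Hconv Hd); lra.
  - intros e He; apply Rle_ge, (Df_gap_le_ef n P Q HP HQ HPQ f f1 f2 Hd e He).
  - intros c Hc; apply Rle_ge, (Df_gap_ge_cf n P Q HP HQ HPQ f f1 f2 Hd c Hc).
  - lra.
  - intro Hchi; rewrite Df_gap_chi2 by assumption.
    destruct (chi2_cf_ef f2 _ _ Hrange (chi2_second_derivative f f1 f2 Hchi Hd))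
      as [Hef Hcf].
    split; [intros e He; rewrite (Hef e He) | intros c Hc; rewrite (Hcf c Hc)]; ring.
  - intros rho Hrho Hratio; split; [lra | apply sqnorm2_gap_le; assumption].
Qed.
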